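(* For every $q\geqslant 1$ and all natural numbers $m_0,\dots,m_{q-1}>1$, the following sentences are provable in the theory ${\sf TQ}$: $\forall x_0,\dots,x_{q-1}\exists y\,[\bigwedge_{j<q}\neg\Re_{m_j}(y\cdot x_j)]$; $\forall x_0,\dots,x_{q-1},u\exists y\,[u<y\wedge\bigwedge_{j<q}\neg\Re_{m_j}(y\cdot x_j)]$; $\forall x_0,\dots,x_{q-1},v\exists y\,[y<v\wedge\bigwedge_{j<q}\neg\Re_{m_j}(y\cdot x_j)]$; $\forall x_0,\dots,x_{q-1},u,v\exists y\,[u<v\rightarrow (u<y\wedge y<v\wedge\bigwedge_{j<q}\neg\Re_{m_j}(y\cdot x_j))]$.
   Context: Language $\{<,\times,\square^{-1},\mathbf{1}\}$; $y^n$ abbreviates $y\cdots y$ ($n$ times); for $n\geqslant 1$, $\Re_n(y)$ abbreviates the formula $\exists x\,(y=x^n)$. ${\sf TQ}$ is the theory axiomatized by: ($\texttt{O}_1$) $\forall x,y(x<y\rightarrow\neg(y<x))$; ($\texttt{O}_2$) $\forall x,y,z(x<y\wedge y<z\rightarrow x<z)$; ($\texttt{O}_3$) $\forall x,y(x<y\vee x=y\vee y<x)$; ($\texttt{M}_1$) $\forall x,y,z(x\cdot(y\cdot z)=(x\cdot y)\cdot z)$; ($\texttt{M}_2$) $\forall x(x\cdot\mathbf{1}=x)$; ($\texttt{M}_3$) $\forall x(x\cdot x^{-1}=\mathbf{1})$; ($\texttt{M}_4$) $\forall x,y(x\cdot y=y\cdot x)$; ($\texttt{M}_5$) $\forall x,y,z(x<y\rightarrow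 x\cdot z<y\cdot z)$; ($\texttt{M}_6$) $\exists y(y\neq\mathbf{1})$; ($\texttt{M}_{10}$) for each $n\geqslant1$: $\forall x,z\exists y(x<z\rightarrow x<y^n\wedge y^n<z)$; ($\texttt{M}_{11}$) for each $n\geqslant 1$, each $q\geqslant1$ and all natural numbers $m_0,\dots,m_{q-1}>1$: $\forall x_0,\dots,x_{q-1}\exists y\forall z\bigwedge_{j<q,\ m_j\nmid n}(y^n\cdot x_j\neq z^{m_j})$, the conjunction ranging over those $j<q$ for which $m_j$ does not divide $n$. *)

(* Models of the first-order theory TQ over the language
   {<, *, ^-1, 1}.  "Provable in TQ" is rendered semantically: true in
   every model of TQ (equivalent by Goedel's completeness theorem). *)
From Stdlib Require Import Arith PeanoNat.

Record TQstruct := {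
  car :> Type;
  lt : car -> car -> Prop;
  mul : car -> car -> car;
  inv : car -> car;
  one : car
}.

(* y^n = y...y (n times), for n >= 1; y^0 is set to 1 (never used). *)
Fixpoint pw (M : TQstruct) (y : M) (n : nat) : M :=
  match n with
  | 0 => one M
  | 1 => y
  | S k => mul M y (pw M y k)
  end.

Definition Re (M : TQstruct) (n : nat) (y : M) : Prop :=
  exists x : M, y = pw M x n.

Definition TQ (M : TQstruct) : Prop :=
  let lt := lt M in let mul := mul M in
  (forall x y : M, lt x y -> ~ lt y x) /\
  (forall x y z : M, lt x y -> lt y z -> lt x z) /\
  (forall x y : M, lt x y \/ x = y \/ lt y x) /\
  (forall x y z : M, mul x (mul y z) = mul (mul x y) z) /\
  (forall x : M, mul x (one M) = x) /\
  (forall x : M, mul x (inv M x) = one M) /\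
  (forall x y : M, mul x y = mul y x) /\
  (forall x y z : M, lt x y -> lt (mul x z) (mul y z)) /\
  (exists y : M, y <> one M) /\
  (* M10 *) (forall n : nat, 1 <= n ->
       forall x z : M, exists y : M,
         lt x z -> lt x (pw M y n) /\ lt (pw M y n) z) /\
  (* M11 *) (forall (n q : nat) (m : nat -> nat), 1 <= n -> 1 <= q ->
       (forall j, j < q -> 1 < m j) ->
       forall x : nat -> M, exists y : M, forall z : M,
         forall j, j < q -> ~ Nat.divide (m j) n ->
           mul (pw M y n) (x j) <> pw M z (m j)).

(* Axiom M11 with n = 1 gives a translate w such that every w * x_j is a non-m_j-th
   power.  Multiplying w by a P-th power t^P, where P is a common multiple of the m_j,
   keeps this property, since t^P is an m_j-th power for every j; by axiom M10 the
   power t^P can be chosen so that t^P * w lands in any prescribed interval. *)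
From Stdlib Require Import Arith PeanoNat Lia.

Definition abelian_group (M : TQstruct) : Prop :=
  (forall x y z : M, mul M x (mul M y z) = mul M (mul M x y) z) /\
  (forall x : M, mul M x (one M) = x) /\
  (forall x : M, mul M x (inv M x) = one M) /\
  (forall x y : M, mul M x y = mul M y x).

Section AbelianGroup.
Variable M : TQstruct.
Hypothesis HG : abelian_group M.

Let mulA : forall x y z : M, mul M x (mul M y z) = mul M (mul M x y) z.
Proof. apply HG. Qed.
Let mulx1 : forall x : M, mul M x (one M) = x.
Proof. apply HG. Qed.
Let mulxV : forall x : M, mul M x (inv M x) = one M.
Proof. apply HG. Qed.
Let mulC : forall x y : M, mul M x y = mul M y x.
Proof. apply HG. Qed.

Lemma mul1x (x : M) : mul M (one M) x = x.
Proof. now rewrite mulC, mulx1. Qed.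

Lemma mulVKx (x w : M) : mul M (mul M x (inv M w)) w = x.
Proof. now rewrite <- mulA, (mulC (inv M w)), mulxV, mulx1. Qed.

Lemma pw_S (y : M) (k : nat) : pw M y (S k) = mul M y (pw M y k).
Proof. destruct k; simpl; [rewrite mulx1|]; reflexivity. Qed.

Lemma pw_add (y : M) (a b : nat) : pw M y (a + b) = mul M (pw M y a) (pw M y b).
Proof.
  induction a as [|a IH]; simpl plus.
  - now rewrite mul1x.
  - now rewrite !pw_S, IH, mulA.
Qed.

Lemma pw_mul_exp (y : M) (a b : nat) : pw M y (a * b) = pw M (pw M y a) b.
Proof.
  induction b as [|b IH].
  - now rewrite Nat.mul_0_r.
  - now rewrite pw_S, <- IH, Nat.mul_succ_r, Nat.add_comm, pw_add.
Qed.

Lemma pw_mul_base (a b : M) (n : nat) :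
  pw M (mul M a b) n = mul M (pw M a n) (pw M b n).
Proof.
  induction n as [|n IH].
  - now rewrite mulx1.
  - rewrite !pw_S, IH, <- !mulA. f_equal.
    now rewrite !mulA, (mulC b).
Qed.

Lemma pw_one (n : nat) : pw M (one M) n = one M.
Proof. induction n as [|n IH]; [reflexivity|]. now rewrite pw_S, IH, mulx1. Qed.

Lemma Re_pw_mul (m n : nat) (t a : M) :
  Nat.divide m n -> Re M m (mul M (pw M t n) a) -> Re M m a.
Proof.
  intros [k ->] [z Hz].
  set (s := pw M t k).
  exists (mul M z (inv M s)).
  rewrite pw_mul_base, <- Hz, pw_mul_exp. fold s.
  rewrite (mulC _ a), <- mulA, <- pw_mul_base, mulxV, pw_one.
  now rewrite mulx1.
Qed.

End AbelianGroup.

Lemma common_multiple (m : nat -> nat) (q : nat) :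
  (forall j, j < q -> 0 < m j) ->
  exists P, 1 <= P /\ forall j, j < q -> Nat.divide (m j) P.
Proof.
  induction q as [|q IH]; intros Hm.
  - exists 1. split; [lia | intros j Hj; lia].
  - destruct IH as [P [HP HdivP]]; [intros j Hj; apply Hm; lia|].
    assert (Hmq : 0 < m q) by (apply Hm; lia).
    exists (P * m q). split; [nia|].
    intros j Hj. destruct (Nat.eq_dec j q) as [->|Hne].
    + apply Nat.divide_factor_r.
    + apply Nat.divide_mul_l, HdivP. lia.
Qed.

Section TQModels.
Variable M : TQstruct.
Hypothesis HM : TQ M.

Lemma TQ_abelian_group : abelian_group M.
Proof. destruct HM as (_&_&_&?&?&?&?&_). now repeat split. Qed.

Let lt_asym : forall x y : M, lt M x y -> ~ lt M y x.
Proof. apply HM. Qed.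
Let lt_total : forall x y : M, lt M x y \/ x = y \/ lt M y x.
Proof. apply HM. Qed.
Let lt_mulr : forall x y z : M, lt M x y -> lt M (mul M x z) (mul M y z).
Proof. apply HM. Qed.

Lemma TQ_lt_dec (u v : M) : lt M u v \/ ~ lt M u v.
Proof.
  destruct (lt_total u v) as [Huv | [<- | Hvu]]; [now left | right ..].
  - intros Huu. exact (lt_asym u u Huu Huu).
  - intros Huv. exact (lt_asym u v Huv Hvu).
Qed.

Lemma TQ_exists_gt_one : exists b : M, lt M (one M) b.
Proof.
  pose proof TQ_abelian_group as HG.
  destruct HM as (_&_&_&_&_&mulxV&_&_&[a Ha]&_).
  destruct (lt_total a (one M)) as [Ha1 | [-> | H1a]]; [| easy | now exists a].
  exists (inv M a).
  pose proof (lt_mulr _ _ (inv M a) Ha1) as Hinv.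
  now rewrite mulxV, (mul1x M HG) in Hinv.
Qed.

Lemma TQ_exists_gt (u : M) : exists v : M, lt M u v.
Proof.
  destruct TQ_exists_gt_one as [b Hb].
  exists (mul M b u).
  pose proof (lt_mulr _ _ u Hb) as Hu.
  now rewrite (mul1x M TQ_abelian_group) in Hu.
Qed.

Lemma TQ_exists_lt (v : M) : exists u : M, lt M u v.
Proof.
  pose proof TQ_abelian_group as HG.
  destruct TQ_exists_gt_one as [b Hb].
  exists (mul M v (inv M b)).
  pose proof (lt_mulr _ _ (mul M v (inv M b)) Hb) as Hv.
  destruct TQ_abelian_group as (_&_&_&mulC).
  now rewrite (mul1x M HG), (mulC b), (mulVKx M HG) in Hv.
Qed.

Variables (q : nat) (m : nat -> nat).
Hypotheses (Hq : 1 <= q) (Hm : forall j, j < q -> 1 < m j).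

Lemma TQ_nonpower_translate (x : nat -> M) :
  exists w : M, forall j, j < q -> ~ Re M (m j) (mul M w (x j)).
Proof.
  destruct HM as (_&_&_&_&_&_&_&_&_&_&shift).
  destruct (shift 1 q m (le_n 1) Hq Hm x) as [w Hw].
  exists w. intros j Hj [z Hz].
  apply (Hw z j Hj); [|exact Hz].
  intros Hdiv%Nat.divide_1_r. specialize (Hm j Hj). lia.
Qed.

Lemma TQ_nonpower_between (x : nat -> M) (u v : M) :
  lt M u v -> exists y : M,
    lt M u y /\ lt M y v /\ forall j, j < q -> ~ Re M (m j) (mul M y (x j)).
Proof.
  intros Huv.
  pose proof TQ_abelian_group as HG.
  destruct HM as (_&_&_&mulA&_&_&_&_&_&dense&_).
  destruct (TQ_nonpower_translate x) as [w Hw].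
  destruct (common_multiple m q) as [P [HP HdivP]]; [intros j Hj; specialize (Hm j Hj); lia|].
  destruct (dense P HP (mul M u (inv M w)) (mul M v (inv M w))) as [t Ht].
  destruct Ht as [Hut Htv]; [now apply lt_mulr|].
  exists (mul M (pw M t P) w). split; [|split].
  - rewrite <- (mulVKx M HG u w). now apply lt_mulr.
  - rewrite <- (mulVKx M HG v w). now apply lt_mulr.
  - intros j Hj Hre. apply (Hw j Hj).
    apply (Re_pw_mul M HG (m j) P t); [now apply HdivP|].
    now rewrite mulA.
Qed.

End TQModels.

Theorem lemma4 :
  forall (q : nat) (m : nat -> nat), 1 <= q -> (forall j, j < q -> 1 < m j) ->
  forall M : TQstruct, TQ M ->
    (forall x : nat -> M, exists y : M,
        forall j, j < q -> ~ Re M (m j) (mul M y (x j))) /\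
    (forall (x : nat -> M) (u : M), exists y : M,
        lt M u y /\ forall j, j < q -> ~ Re M (m j) (mul M y (x j))) /\
    (forall (x : nat -> M) (v : M), exists y : M,
        lt M y v /\ forall j, j < q -> ~ Re M (m j) (mul M y (x j))) /\
    (forall (x : nat -> M) (u v : M), exists y : M,
        lt M u v ->
        (lt M u y /\ lt M y v /\
         forall j, j < q -> ~ Re M (m j) (mul M y (x j)))).
Proof.
  intros q m Hq Hm M HM.
  split; [|split; [|split]].
  - exact (TQ_nonpower_translate M HM q m Hq Hm).
  - intros x u. destruct (TQ_exists_gt M HM u) as [v Huv].
    destruct (TQ_nonpower_between M HM q m Hq Hm x u v Huv) as [y (Huy & _ & Hy)].
    eauto.
  - intros x v. destruct (TQ_exists_lt M HM v) as [u Huv].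
    destruct (TQ_nonpower_between M HM q m Hq Hm x u v Huv) as [y (_ & Hyv & Hy)].
    eauto.
  - intros x u v. destruct (TQ_lt_dec M HM u v) as [Huv | Hnuv].
    + destruct (TQ_nonpower_between M HM q m Hq Hm x u v Huv) as [y Hy]. eauto.
    + exists u. intros Huv. contradiction.
Qed.
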